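(* Let $C_n=\frac{1}{n+1}\binom{2n}{n}$ be the Catalan numbers. Then for every even integer $n\ge2$, $$C_n=\frac{1}{4n}\sum_{h=0}^{n-2}\binom{n}{h}(-1)^h4^{n-h}C_{h+1},$$ and for every odd integer $n\ge1$, $$C_{n+1}=\frac12\sum_{h=0}^{n-1}\binom{n}{h}(-1)^h4^{n-h}C_{h+1}.$$ *)

From mathcomp Require Import all_boot all_order all_algebra.
Set Implicit Arguments. Unset Strict Implicit. Unset Printing Implicit Defensive.
Import Order.TTheory GRing.Theory Num.Theory.
Local Open Scope ring_scope.

Definition catalan (n : nat) : rat := ('C(n.*2, n))%:R / (n.+1)%:R.

From mathcomp Require Import all_boot all_order all_algebra.
From mathcomp Require Import zify ring lra.
Set Implicit Arguments. Unset Strict Implicit. Unset Printing Implicit Defensive.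
Import Order.TTheory GRing.Theory Num.Theory.
Local Open Scope ring_scope.

(* Write [B f n = \sum_(h <= n) 'C(n, h) (-1)^h 4^(n-h) f h]. Both claims follow from
   [B g n = C_(n+1)] for [g k = C_(k+1)] by splitting off the last one or two terms.
   Since [B (f \o succn) n = 4 B f n - B f n.+1] and [B (k f k) n.+1 = -(n+1) B (f \o succn) n],
   the transform maps a recurrence [(k + p) g k.+1 = (a k + q) g k] to
   [(m + p) B m.+1 = (a m + (p a - q)) B m] for [m >= 1]: the terms in [B m.-1] cancel.
   The Catalan recurrence [(k + 3) g k.+1 = (4 k + 6) g k] is a fixed point of this map
   because [3 * 4 - 6 = 6], and [B g] agrees with [g] at 0 and 1. *)

Lemma mul_bin_double m : (m.+1 * 'C(m.+1.*2, m.+1) = 2 * m.*2.+1 * 'C(m.*2, m))%N.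
Proof.
have sub_m : (m.*2.+1 - m = m.+1)%N by rewrite -addnn; lia.
rewrite -mul_bin_diag doubleS /= -mulnA (mul_bin_down m.*2.+1) /= sub_m.
lia.
Qed.

Lemma catalanS n : n.+2%:R * catalan n.+1 = (4 * n%:R + 2) * catalan n.
Proof.
have n1_neq0 : n.+1%:R != 0 :> rat by rewrite pnatr_eq0.
rewrite /catalan mulrCA mulfV ?pnatr_eq0 // mulr1.
apply: (mulIf n1_neq0).
rewrite -[LHS]natrM mulnC mul_bin_double -[RHS]mulrA divfK // -mul2n.
ring.
Qed.

Section BinomialTransform.
Variables (R : comPzRingType) (a : R).

Definition btrans (f : nat -> R) n :=
  \sum_(h < n.+1) 'C(n, h)%:R * (-1) ^+ h * a ^+ (n - h) * f h.

Lemma eq_btrans f g n : f =1 g -> btrans f n = btrans g n.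
Proof. by move=> fg; apply: eq_bigr => h _; rewrite fg. Qed.

Lemma btransD f g n : btrans (fun k => f k + g k) n = btrans f n + btrans g n.
Proof. by rewrite -big_split; apply: eq_bigr => h _ /=; ring. Qed.

Lemma btransZ c f n : btrans (fun k => c * f k) n = c * btrans f n.
Proof. by rewrite mulr_sumr; apply: eq_bigr => h _; ring. Qed.

Lemma btrans_shift f n :
  btrans (fun k => f k.+1) n = a * btrans f n - btrans f n.+1.
Proof.
have btrans_padded : btrans f n =
    \sum_(h < n.+2) 'C(n, h)%:R * (-1) ^+ h * a ^+ (n - h) * f h.
  by rewrite [RHS]big_ord_recr /= bin_small // !mul0r addr0.
rewrite btrans_padded /btrans mulr_sumr !(big_ord_recl n.+1) /=.
rewrite bin0 !subn0 expr0 !mulr1 !mul1r opprD addrACA mulrA -exprS subrr add0r -sumrB.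
apply: eq_bigr => i _; rewrite /bump add1n binS natrD subSS exprS.
have [i_lt_n | i_ge_n] := ltnP i n.
  by rewrite -(subnSK i_lt_n) exprS; ring.
have -> : i = n :> nat by have := ltn_ord i; lia.
by rewrite (bin_small (ltnSn n)); ring.
Qed.

Lemma btrans_mul_index f n :
  btrans (fun k => k%:R * f k) n.+1 = - n.+1%:R * btrans (fun k => f k.+1) n.
Proof.
rewrite /btrans big_ord_recl /= mul0r mulr0 add0r mulr_sumr.
apply: eq_bigr => h _; rewrite /bump /= add1n subSS exprS.
have binS_mul : 'C(n.+1, h.+1)%:R * h.+1%:R = n.+1%:R * 'C(n, h)%:R :> R.
  by rewrite -!natrM mulnC -mul_bin_diag.
transitivity (- ('C(n.+1, h.+1)%:R * h.+1%:R) * (-1) ^+ h * a ^+ (n - h) * f h.+1).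
  by ring.
by rewrite binS_mul; ring.
Qed.

Lemma btrans_affine b c f n :
  btrans (fun k => (b * k%:R + c) * f k) n.+1 =
  - b * n.+1%:R * btrans (fun k => f k.+1) n + c * btrans f n.+1.
Proof.
rewrite (@eq_btrans _ (fun k => b * (k%:R * f k) + c * f k)); last by move=> k /=; ring.
by rewrite btransD !btransZ btrans_mul_index; ring.
Qed.

Lemma btrans_rec p q g :
    (forall k, (k%:R + p) * g k.+1 = (a * k%:R + q) * g k) ->
  forall n, (n.+1%:R + p) * btrans g n.+2 =
            (a * n.+1%:R + (p * a - q)) * btrans g n.+1.
Proof.
move=> g_rec n.
have E : btrans (fun k => (1 * k%:R + p) * g k.+1) n.+1 =
         btrans (fun k => (a * k%:R + q) * g k) n.+1.
  by apply: eq_btrans => k /=; rewrite mul1r g_rec.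
rewrite !btrans_affine (btrans_shift (fun k => g k.+1)) !btrans_shift in E.
move/eqP: E; rewrite -subr_eq0 => /eqP E.
by apply/eqP; rewrite -subr_eq0 -oppr_eq0 -E; apply/eqP; ring.
Qed.

End BinomialTransform.

Lemma btrans_catalan n : btrans 4 (fun k => catalan k.+1) n = catalan n.+1.
Proof.
have catalan_rec k : (k%:R + 3) * catalan k.+2 = (4 * k%:R + 6) * catalan k.+1.
  by transitivity (k.+3%:R * catalan k.+2); [ring | rewrite catalanS; ring].
elim: n => [|[|m] IH].
- by rewrite /btrans big_ord1.
- by rewrite /btrans !big_ord_recr big_ord0; apply/eqP.
- have m_neq0 : m.+1%:R + 3 != 0 :> rat by rewrite -natrD pnatr_eq0 addn3.
  apply: (mulfI m_neq0).
  by rewrite (@btrans_rec _ 4 3 6 (fun k => catalan k.+1) catalan_rec) IH catalan_rec; ring.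
Qed.

Lemma catalan_even k : ~~ odd k ->
  catalan k.+2 = (4 * k.+2%:R)^-1 *
    \sum_(0 <= h < k.+1) 'C(k.+2, h)%:R * (-1) ^+ h * 4 ^+ (k.+2 - h) * catalan h.+1.
Proof.
move=> k_even; rewrite big_mkord.
have sign_k : (-1) ^+ k = 1 :> rat by rewrite -signr_odd (negbTE k_even).
have E := btrans_catalan k.+2.
rewrite /btrans 2!big_ord_recr /= binSn binn subnn !exprS sign_k subSnn in E.
have c_neq0 : 4 * k.+2%:R != 0 :> rat by rewrite mulf_neq0 ?pnatr_eq0.
apply: (mulfI c_neq0); rewrite mulVKf //.
lra.
Qed.

Lemma catalan_odd n : odd n ->
  catalan n.+1 = 2^-1 *
    \sum_(0 <= h < n) 'C(n, h)%:R * (-1) ^+ h * 4 ^+ (n - h) * catalan h.+1.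
Proof.
move=> n_odd; rewrite big_mkord.
have E := btrans_catalan n.
rewrite /btrans big_ord_recr /= binn subnn -signr_odd n_odd in E.
apply: (@mulfI _ 2) => //; rewrite mulVKf //.
lra.
Qed.

Theorem mainTheorem12 :
  (forall n : nat, (2 <= n)%N -> ~~ odd n ->
     catalan n = (4 * n%:R)^-1 *
       \sum_(0 <= h < n.-1) ('C(n, h))%:R * (-1) ^+ h * 4 ^+ (n - h) * catalan h.+1)
  /\
  (forall n : nat, (1 <= n)%N -> odd n ->
     catalan n.+1 = 2^-1 *
       \sum_(0 <= h < n) ('C(n, h))%:R * (-1) ^+ h * 4 ^+ (n - h) * catalan h.+1).
Proof.
split=> [[|[|k]] // _ | n _]; last exact: catalan_odd.
by rewrite /= negbK; exact: catalan_even.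
Qed.
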